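(* Neither of the real simple Lie algebras $so(3)$ and $sl(2,\mathbb R)$ admits a realization as a Lie algebra of Lie point symmetry generators of an equation $u_{tx}=g(t,x)u_x+f(t,x,u)$ with $g_x\neq0$, $f_{uu}\neq0$; that is, there are no three vector fields of the form $\tau(t)\partial_t+\xi(x)\partial_x+[h(t)u+r(t,x)]\partial_u$ that are symmetries of such an equation and satisfy the commutation relations of $so(3)$ or of $sl(2,\mathbb R)$.
   Context: Lie point symmetry generators of equations $u_{tx}=g(t,x)u_x+f(t,x,u)$ ($g_x\neq0$, $f_{uu}\neq0$) are vector fields of the form $\tau(t)\partial_t+\xi(x)\partial_x+[h(t)u+r(t,x)]\partial_u$. All functions are smooth and considerations are local. *)

From Stdlib Require Import Reals.
From Coquelicot Require Import Coquelicot.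
Open Scope R_scope.

Definition fun3 := R -> R -> R -> R.

Definition d3 (k : nat) (F : fun3) : fun3 :=
  fun t x u =>
    match k with
    | O => Derive (fun s => F s x u) t
    | 1%nat => Derive (fun s => F t s u) x
    | _ => Derive (fun s => F t x s) u
    end.

Definition ex_d3 (k : nat) (F : fun3) (t x u : R) : Prop :=
  match k with
  | O => ex_derive (fun s => F s x u) t
  | 1%nat => ex_derive (fun s => F t s u) x
  | _ => ex_derive (fun s => F t x s) u
  end.

Definition in_box (t0 t1 x0 x1 u0 u1 t x u : R) : Prop :=
  t0 < t < t1 /\ x0 < x < x1 /\ u0 < u < u1.

Definition cont_box (t0 t1 x0 x1 u0 u1 : R) (F : fun3) : Prop :=
  forall t x u, in_box t0 t1 x0 x1 u0 u1 t x u ->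
    continuous (fun p : R * R * R => F (fst (fst p)) (snd (fst p)) (snd p))
               (t, x, u).

Fixpoint Cn_box (t0 t1 x0 x1 u0 u1 : R) (n : nat) (F : fun3) {struct n} : Prop :=
  match n with
  | O => cont_box t0 t1 x0 x1 u0 u1 F
  | S m => cont_box t0 t1 x0 x1 u0 u1 F /\
           forall k : nat, (k < 3)%nat ->
             (forall t x u, in_box t0 t1 x0 x1 u0 u1 t x u -> ex_d3 k F t x u) /\
             Cn_box t0 t1 x0 x1 u0 u1 m (d3 k F)
  end.

Definition smooth_box (t0 t1 x0 x1 u0 u1 : R) (F : fun3) : Prop :=
  forall n, Cn_box t0 t1 x0 x1 u0 u1 n F.

(* Q = vt d/dt + vx d/dx + vu d/du *)
Record vfield := VF { vt : fun3 ; vx : fun3 ; vu : fun3 }.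

Definition comp (Q : vfield) (i : nat) : fun3 :=
  match i with O => vt Q | 1%nat => vx Q | _ => vu Q end.

Definition apply_vf (Q : vfield) (F : fun3) : fun3 :=
  fun t x u => vt Q t x u * d3 0 F t x u + vx Q t x u * d3 1 F t x u
             + vu Q t x u * d3 2 F t x u.

Definition bracket (Q P : vfield) : vfield :=
  VF (fun t x u => apply_vf Q (vt P) t x u - apply_vf P (vt Q) t x u)
     (fun t x u => apply_vf Q (vx P) t x u - apply_vf P (vx Q) t x u)
     (fun t x u => apply_vf Q (vu P) t x u - apply_vf P (vu Q) t x u).

Definition lincomb3 (a b c : R) (Q1 Q2 Q3 : vfield) : vfield :=
  VF (fun t x u => a * vt Q1 t x u + b * vt Q2 t x u + c * vt Q3 t x u)
     (fun t x u => a * vx Q1 t x u + b * vx Q2 t x u + c * vx Q3 t x u)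
     (fun t x u => a * vu Q1 t x u + b * vu Q2 t x u + c * vu Q3 t x u).

Definition scale_vf (a : R) (Q : vfield) : vfield :=
  VF (fun t x u => a * vt Q t x u) (fun t x u => a * vx Q t x u)
     (fun t x u => a * vu Q t x u).

Definition vf_eq_box (t0 t1 x0 x1 u0 u1 : R) (Q P : vfield) : Prop :=
  forall t x u, in_box t0 t1 x0 x1 u0 u1 t x u ->
    vt Q t x u = vt P t x u /\ vx Q t x u = vx P t x u /\ vu Q t x u = vu P t x u.

Definition vf_zero : vfield := VF (fun _ _ _ => 0) (fun _ _ _ => 0) (fun _ _ _ => 0).

Definition lin_indep3 (t0 t1 x0 x1 u0 u1 : R) (Q1 Q2 Q3 : vfield) : Prop :=
  forall a b c : R,
    vf_eq_box t0 t1 x0 x1 u0 u1 (lincomb3 a b c Q1 Q2 Q3) vf_zero ->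
    a = 0 /\ b = 0 /\ c = 0.

Definition special_form (t0 t1 x0 x1 u0 u1 : R) (Q : vfield) : Prop :=
  exists (tau xi h : R -> R) (r : R -> R -> R),
    forall t x u, in_box t0 t1 x0 x1 u0 u1 t x u ->
      vt Q t x u = tau t /\ vx Q t x u = xi x /\ vu Q t x u = h t * u + r t x.

(* A point of the second-order jet space, coordinates:
   0:t 1:x 2:u 3:u_t 4:u_x 5:u_tt 6:u_tx 7:u_xx *)
Definition jet := nat -> R.

Definition upd (p : jet) (k : nat) (s : R) : jet :=
  fun i => if Nat.eqb i k then s else p i.

Definition pd (k : nat) (F : jet -> R) (p : jet) : R :=
  Derive (fun s => F (upd p k s)) (p k).

Definition lift3 (F : fun3) : jet -> R := fun p => F (p 0%nat) (p 1%nat) (p 2%nat).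

(* Total derivatives D_t, D_x of jet functions depending on (t,x,u,u_t,u_x)
   only (for such functions these are the exact total derivatives). *)
Definition Dt (F : jet -> R) (p : jet) : R :=
  pd 0 F p + p 3%nat * pd 2 F p + p 5%nat * pd 3 F p + p 6%nat * pd 4 F p.
Definition Dx (F : jet -> R) (p : jet) : R :=
  pd 1 F p + p 4%nat * pd 2 F p + p 6%nat * pd 3 F p + p 7%nat * pd 4 F p.

Definition eta_t (Q : vfield) (p : jet) : R :=
  Dt (lift3 (vu Q)) p - p 3%nat * Dt (lift3 (vt Q)) p - p 4%nat * Dt (lift3 (vx Q)) p.
Definition eta_x (Q : vfield) (p : jet) : R :=
  Dx (lift3 (vu Q)) p - p 3%nat * Dx (lift3 (vt Q)) p - p 4%nat * Dx (lift3 (vx Q)) p.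
Definition eta_tt (Q : vfield) (p : jet) : R :=
  Dt (eta_t Q) p - p 5%nat * Dt (lift3 (vt Q)) p - p 6%nat * Dt (lift3 (vx Q)) p.
Definition eta_tx (Q : vfield) (p : jet) : R :=
  Dx (eta_t Q) p - p 5%nat * Dx (lift3 (vt Q)) p - p 6%nat * Dx (lift3 (vx Q)) p.
Definition eta_xx (Q : vfield) (p : jet) : R :=
  Dx (eta_x Q) p - p 6%nat * Dx (lift3 (vt Q)) p - p 7%nat * Dx (lift3 (vx Q)) p.

Definition pr2 (Q : vfield) (Delta : jet -> R) (p : jet) : R :=
    lift3 (vt Q) p * pd 0 Delta p + lift3 (vx Q) p * pd 1 Delta p
  + lift3 (vu Q) p * pd 2 Delta p
  + eta_t Q p * pd 3 Delta p + eta_x Q p * pd 4 Delta p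
  + eta_tt Q p * pd 5 Delta p + eta_tx Q p * pd 6 Delta p
  + eta_xx Q p * pd 7 Delta p.

Definition Delta_eq (g : R -> R -> R) (f : fun3) (p : jet) : R :=
  p 6%nat - g (p 0%nat) (p 1%nat) * p 4%nat - f (p 0%nat) (p 1%nat) (p 2%nat).

Definition is_symmetry (t0 t1 x0 x1 u0 u1 : R) (g : R -> R -> R) (f : fun3)
    (Q : vfield) : Prop :=
  forall p : jet, in_box t0 t1 x0 x1 u0 u1 (p 0%nat) (p 1%nat) (p 2%nat) ->
    Delta_eq g f p = 0 -> pr2 Q (Delta_eq g f) p = 0.

Definition so3_relations (t0 t1 x0 x1 u0 u1 : R) (Q1 Q2 Q3 : vfield) : Prop :=
  vf_eq_box t0 t1 x0 x1 u0 u1 (bracket Q1 Q2) Q3 /\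
  vf_eq_box t0 t1 x0 x1 u0 u1 (bracket Q2 Q3) Q1 /\
  vf_eq_box t0 t1 x0 x1 u0 u1 (bracket Q3 Q1) Q2.

Definition sl2_relations (t0 t1 x0 x1 u0 u1 : R) (Q1 Q2 Q3 : vfield) : Prop :=
  vf_eq_box t0 t1 x0 x1 u0 u1 (bracket Q1 Q2) Q1 /\
  vf_eq_box t0 t1 x0 x1 u0 u1 (bracket Q2 Q3) Q3 /\
  vf_eq_box t0 t1 x0 x1 u0 u1 (bracket Q1 Q3) (scale_vf 2 Q2).

From Pilot Require Import Defs.
From Stdlib Require Import Reals Lra.
From Coquelicot Require Import Coquelicot.
Open Scope R_scope.

(* Write Q_k = tau_k d_t + xi_k d_x + (h_k u + r_k) d_u.  Brackets act componentwise, so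
   (tau_k) and (xi_k) satisfy the commutation relations as vector fields on a line, and the
   coefficients of u in the d_u-parts give tau_i h_j' - tau_j h_i' = c h_k.

   For so(3) the relations read a = a x a' for a = (tau_k) and a = (xi_k), whence |a|^2 = 0: the
   fields are vertical, and then the d_u-parts force h = 0 and r = 0.

   For sl(2,R) the invariance criterion yields h_k' = tau_k' g + tau_k g_t + xi_k g_x and a second
   determining equation, affine in u.  Differentiating the first in x and the second in u (where
   f_uu <> 0 is used) puts (h_k) in the span of (tau_k) and (xi_k), while the brackets give
   h_k = g tau_k + g_x (tau_i xi_j - tau_j xi_i).  Both (tau_k) and (xi_k) are null for the
   invariant form v_2^2 - v_1 v_3, which forces tau_i xi_j = tau_j xi_i, so h_k = g tau_k.  As h_k
   does not depend on x and g_x <> 0, tau = 0; then h = 0, xi = 0 and r = 0.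

   In both cases Q_1 = 0, contradicting linear independence. *)

(* [auto_derive] leaves eta-expanded [fun x => F x], which [ring] does not identify with [F]. *)
Ltac eta_reduce :=
  repeat match goal with
  | |- context [fun x : R => ?F x] => change (fun x : R => F x) with F
  end.

Lemma locally_open_interval a b y (P : R -> Prop) :
  a < y < b -> (forall s, a < s < b -> P s) -> locally y P.
Proof.
  intros [Ha Hb] HP. apply (locally_interval _ y a b Ha Hb).
  intros s Has Hsb. apply HP. split; assumption.
Qed.

Lemma Derive_locally_const (F : R -> R) c y :
  locally y (fun s => F s = c) -> Derive F y = 0.
Proof.
  intros HF. rewrite (Derive_ext_loc F (fun _ => c)) by exact HF. apply Derive_const.
Qed.

Lemma Derive_const_plus (F : R -> R) a y : Derive (fun s => a + F s) y = Derive F y.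
Proof. unfold Derive. f_equal. apply Lim_ext. intros e. f_equal. ring. Qed.

Lemma locally_scaled_const_zero (F : R -> R) a c y :
  locally y (fun s => F s * a = c) -> Derive F y <> 0 -> a = 0.
Proof.
  intros Hc HF0.
  assert (Hd : Derive (fun s => F s * a) y = 0) by exact (Derive_locally_const _ c y Hc).
  rewrite Derive_scal_l in Hd.
  destruct (Rmult_integral _ _ Hd) as [H | H]; [contradiction | exact H].
Qed.

Lemma affine_coeffs_eq a b c d u u' :
  u <> u' -> a * u + b = c * u + d -> a * u' + b = c * u' + d -> a = c /\ b = d.
Proof.
  intros Hu E E'.
  assert (Hac : (a - c) * (u - u') = 0) by lra.
  destruct (Rmult_integral _ _ Hac) as [H | H]; [| lra].
  assert (Hc : a = c) by lra. subst c. split; [reflexivity | lra].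
Qed.

(* a = a x b, hence |a|^2 = (a x b) . a = 0. *)
Lemma so3_fixed_zero a1 a2 a3 b1 b2 b3 :
  a2 * b3 - a3 * b2 = a1 -> a3 * b1 - a1 * b3 = a2 -> a1 * b2 - a2 * b1 = a3 ->
  a1 = 0 /\ a2 = 0 /\ a3 = 0.
Proof.
  intros H1 H2 H3.
  assert (Hn : a1 * a1 + a2 * a2 + a3 * a3 = 0).
  { rewrite <- H1 at 1. rewrite <- H2 at 2. rewrite <- H3 at 3. ring. }
  repeat split; nra.
Qed.

Lemma sl2_cone a1 a2 a3 b1 b2 b3 :
  a1 * b2 - a2 * b1 = a1 -> a2 * b3 - a3 * b2 = a3 -> a1 * b3 - a3 * b1 = 2 * a2 ->
  a2 * a2 = a1 * a3.
Proof.
  intros H1 H2 H3.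
  pose proof (f_equal (Rmult a3) H1). pose proof (f_equal (Rmult a1) H2).
  pose proof (f_equal (Rmult a2) H3). lra.
Qed.

(* (w_1, w_3 / 2, w_2) = (c a + d b) / G for the minors w of (a, b); the vanishing determinant of
   these three vectors gives w_3^2 = 4 w_1 w_2, which on the cone v_2^2 = v_1 v_3 forces w = 0. *)
Lemma cone_commutators_zero a1 a2 a3 b1 b2 b3 c d G :
  a2 * a2 = a1 * a3 -> b2 * b2 = b1 * b3 -> G <> 0 ->
  G * (a1 * b2 - a2 * b1) = c * a1 + d * b1 ->
  G * (a2 * b3 - a3 * b2) = c * a3 + d * b3 ->
  G * (a1 * b3 - a3 * b1) = 2 * (c * a2 + d * b2) ->
  a1 * b2 - a2 * b1 = 0 /\ a2 * b3 - a3 * b2 = 0 /\ a1 * b3 - a3 * b1 = 0.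
Proof.
  intros Ca Cb HG H1 H2 H3.
  set (w1 := a1 * b2 - a2 * b1) in *. set (w2 := a2 * b3 - a3 * b2) in *.
  set (w3 := a1 * b3 - a3 * b1) in *.
  assert (Hdet : (c * a1 + d * b1) * w2 - (c * a2 + d * b2) * w3 + (c * a3 + d * b3) * w1 = 0)
    by (unfold w1, w2, w3; ring).
  assert (Hw : 4 * w1 * w2 = w3 * w3).
  { apply (Rmult_eq_reg_l G); [| exact HG].
    rewrite <- H1, <- H2 in Hdet. pose proof (f_equal (Rmult w3) H3). lra. }
  assert (Hs : a1 * b3 + a3 * b1 - 2 * a2 * b2 = 0).
  { apply Rsqr_0_uniq; unfold Rsqr.
    replace ((a1 * b3 + a3 * b1 - 2 * a2 * b2) * (a1 * b3 + a3 * b1 - 2 * a2 * b2))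
      with (w3 * w3 - 4 * w1 * w2 - 4 * (a1 * a3 - a2 * a2) * (b2 * b2 - b1 * b3))
      by (unfold w1, w2, w3; ring).
    rewrite Ca, Cb, Hw. ring. }
  assert (W1 : w1 = 0).
  { apply Rsqr_0_uniq; unfold Rsqr.
    replace (w1 * w1) with (a1 * b1 * (a1 * b3 + a3 * b1 - 2 * a2 * b2)
      + a1 * a1 * (b2 * b2 - b1 * b3) + b1 * b1 * (a2 * a2 - a1 * a3)) by (unfold w1; ring).
    rewrite Hs, Ca, Cb. ring. }
  assert (W2 : w2 = 0).
  { apply Rsqr_0_uniq; unfold Rsqr.
    replace (w2 * w2) with (a3 * b3 * (a1 * b3 + a3 * b1 - 2 * a2 * b2)
      + b3 * b3 * (a2 * a2 - a1 * a3) + a3 * a3 * (b2 * b2 - b1 * b3)) by (unfold w2; ring).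
    rewrite Hs, Ca, Cb. ring. }
  repeat split; [exact W1 | exact W2 |].
  apply Rsqr_0_uniq; unfold Rsqr. rewrite <- Hw, W1. ring.
Qed.

Lemma affine_in_span H R T X c d c' d' u u' :
  u <> u' -> H * u + R = T * c + X * d -> H * u' + R = T * c' + X * d' ->
  H = T * ((c - c') / (u - u')) + X * ((d - d') / (u - u')).
Proof.
  intros Hu E E'.
  assert (Hd : H * (u - u') = T * (c - c') + X * (d - d')) by lra.
  apply (Rmult_eq_reg_r (u - u')); [rewrite Hd; field |]; lra.
Qed.

Lemma in_span_of_relations A B T X H R G Gt Gx E F P S u :
  G <> 0 -> F <> 0 ->
  A * G + T * Gt + B * G + X * Gx = 0 ->
  - (A + B) * E - (H * u + R) * F - T * P - X * S = 0 ->
  H * u + R = T * ((Gt * E - P * G) / (F * G)) + X * ((Gx * E - S * G) / (F * G)).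
Proof.
  intros HG HF HV HE.
  assert (Hm : (H * u + R) * (F * G) = T * (Gt * E - P * G) + X * (Gx * E - S * G)).
  { pose proof (f_equal (Rmult G) HE). pose proof (f_equal (Rmult E) HV). lra. }
  apply (Rmult_eq_reg_r (F * G)); [rewrite Hm; field; split; assumption |].
  apply Rmult_integral_contrapositive_currified; assumption.
Qed.

Section Box.

Variables t0 t1 x0 x1 u0 u1 : R.

Notation box := (in_box t0 t1 x0 x1 u0 u1).
Notation smooth := (smooth_box t0 t1 x0 x1 u0 u1).

Lemma locally_box_t t x u : box t x u -> locally t (fun s => box s x u).
Proof.
  intros (Ht & Hx & Hu). apply (locally_open_interval _ _ _ _ Ht).
  intros s Hs. split; [| split]; assumption.
Qed.

Lemma locally_box_x t x u : box t x u -> locally x (fun s => box t s u).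
Proof.
  intros (Ht & Hx & Hu). apply (locally_open_interval _ _ _ _ Hx).
  intros s Hs. split; [| split]; assumption.
Qed.

Lemma locally_box_u t x u : box t x u -> locally u (fun s => box t x s).
Proof.
  intros (Ht & Hx & Hu). apply (locally_open_interval _ _ _ _ Hu).
  intros s Hs. split; [| split]; assumption.
Qed.

Lemma d3_ext_box (F G : fun3) k t x u :
  (forall t x u, box t x u -> F t x u = G t x u) -> box t x u ->
  d3 k F t x u = d3 k G t x u.
Proof.
  intros HFG Hb. destruct k as [|[|k]]; apply Derive_ext_loc.
  - apply (filter_imp (fun s => box s x u)); [intros s; apply HFG | apply locally_box_t, Hb].
  - apply (filter_imp (fun s => box t s u)); [intros s; apply HFG | apply locally_box_x, Hb].
  - apply (filter_imp (fun s => box t x s)); [intros s; apply HFG | apply locally_box_u, Hb].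
Qed.

Lemma ex_d3_ext_box (F G : fun3) k t x u :
  (forall t x u, box t x u -> F t x u = G t x u) -> box t x u ->
  ex_d3 k F t x u -> ex_d3 k G t x u.
Proof.
  intros HFG Hb. destruct k as [|[|k]]; apply ex_derive_ext_loc.
  - apply (filter_imp (fun s => box s x u)); [intros s; apply HFG | apply locally_box_t, Hb].
  - apply (filter_imp (fun s => box t s u)); [intros s; apply HFG | apply locally_box_x, Hb].
  - apply (filter_imp (fun s => box t x s)); [intros s; apply HFG | apply locally_box_u, Hb].
Qed.

Lemma smooth_d3 F k : smooth F -> (k < 3)%nat -> smooth (d3 k F).
Proof. intros HF Hk n. exact (proj2 (proj2 (HF (S n)) k Hk)). Qed.

Lemma smooth_ex_d3 F k t x u : smooth F -> (k < 3)%nat -> box t x u -> ex_d3 k F t x u.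
Proof. intros HF Hk Hb. exact (proj1 (proj2 (HF 1%nat) k Hk) t x u Hb). Qed.

Lemma smooth_ex_d3_d3 F j k t x u :
  smooth F -> (j < 3)%nat -> (k < 3)%nat -> box t x u -> ex_d3 k (d3 j F) t x u.
Proof. intros HF Hj Hk. apply smooth_ex_d3; [apply smooth_d3 |]; assumption. Qed.

(** * Fields of the special form *)

Definition special_form_of (Q : vfield) (tau xi h : R -> R) (r : R -> R -> R) : Prop :=
  forall t x u, box t x u ->
    vt Q t x u = tau t /\ vx Q t x u = xi x /\ vu Q t x u = h t * u + r t x.

Section SpecialField.

Context {Q : vfield} {tau xi h : R -> R} {r : R -> R -> R}.

Hypothesis Q_form : special_form_of Q tau xi h r.

Lemma d3_vt t x u : box t x u ->
  d3 0 (vt Q) t x u = Derive tau t /\ d3 1 (vt Q) t x u = 0 /\ d3 2 (vt Q) t x u = 0.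
Proof.
  intros Hb.
  rewrite !(d3_ext_box (vt Q) (fun t _ _ => tau t)) by (apply Hb || apply Q_form).
  unfold d3. rewrite !Derive_const. repeat split.
Qed.

Lemma d3_vx t x u : box t x u ->
  d3 0 (vx Q) t x u = 0 /\ d3 1 (vx Q) t x u = Derive xi x /\ d3 2 (vx Q) t x u = 0.
Proof.
  intros Hb.
  rewrite !(d3_ext_box (vx Q) (fun _ x _ => xi x)) by (apply Hb || apply Q_form).
  unfold d3. rewrite !Derive_const. repeat split.
Qed.

Lemma d3_vu_u t x u : box t x u -> d3 2 (vu Q) t x u = h t.
Proof.
  intros Hb.
  rewrite (d3_ext_box (vu Q) (fun t x u => h t * u + r t x)) by (apply Hb || apply Q_form).
  unfold d3. apply is_derive_unique. auto_derive; [exact I | ring].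
Qed.

Hypotheses (Qx_smooth : smooth (vx Q)) (Qu_smooth : smooth (vu Q)).

Lemma ex_derive_xi t x u : box t x u -> ex_derive xi x.
Proof.
  intros Hb. apply (ex_d3_ext_box (vx Q) (fun _ x _ => xi x) 1 t x u).
  - intros t' x' u' Hb'. apply Q_form, Hb'.
  - exact Hb.
  - apply smooth_ex_d3; auto.
Qed.

Lemma ex_derive_h t x u : box t x u -> ex_derive h t.
Proof.
  intros Hb. apply (ex_d3_ext_box (d3 2 (vu Q)) (fun t _ _ => h t) 0 t x u).
  - exact d3_vu_u.
  - exact Hb.
  - apply smooth_ex_d3_d3; auto.
Qed.

Lemma ex_derive_r_t t x u : box t x u -> ex_derive (fun s => r s x) t.
Proof.
  intros Hb. apply (ex_d3_ext_box (fun t x u => vu Q t x u - h t * u) (fun t x _ => r t x) 0 t x u).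
  - intros t' x' u' Hb'. destruct (Q_form _ _ _ Hb') as (_ & _ & ->). ring.
  - exact Hb.
  - unfold ex_d3. auto_derive. split; [apply (smooth_ex_d3 _ 0 t x u) | split]; auto.
    exact (ex_derive_h t x u Hb).
Qed.

Lemma ex_derive_r_x t x u : box t x u -> ex_derive (r t) x.
Proof.
  intros Hb. apply (ex_d3_ext_box (fun t x u => vu Q t x u - h t * u) (fun t x _ => r t x) 1 t x u).
  - intros t' x' u' Hb'. destruct (Q_form _ _ _ Hb') as (_ & _ & ->). ring.
  - exact Hb.
  - unfold ex_d3. auto_derive. apply (smooth_ex_d3 _ 1 t x u); auto.
Qed.

Lemma d3_vu t x u : box t x u ->
  d3 0 (vu Q) t x u = Derive h t * u + Derive (fun s => r s x) t /\
  d3 1 (vu Q) t x u = Derive (r t) x /\ d3 2 (vu Q) t x u = h t.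
Proof.
  intros Hb. split; [| split; [| exact (d3_vu_u t x u Hb)]];
  rewrite (d3_ext_box (vu Q) (fun t x u => h t * u + r t x)) by (apply Hb || apply Q_form);
  unfold d3; apply is_derive_unique; auto_derive.
  - split; [exact (ex_derive_h t x u Hb) | split; [exact (ex_derive_r_t t x u Hb) | exact I]].
  - eta_reduce. ring.
  - exact (ex_derive_r_x t x u Hb).
  - eta_reduce. ring.
Qed.

End SpecialField.

Lemma bracket_special {Q tauQ xiQ hQ rQ P tauP xiP hP rP} :
  special_form_of Q tauQ xiQ hQ rQ -> smooth (vu Q) ->
  special_form_of P tauP xiP hP rP -> smooth (vu P) ->
  forall t x u, box t x u ->
  vt (bracket Q P) t x u = tauQ t * Derive tauP t - tauP t * Derive tauQ t /\
  vx (bracket Q P) t x u = xiQ x * Derive xiP x - xiP x * Derive xiQ x /\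
  vu (bracket Q P) t x u =
    (tauQ t * Derive hP t - tauP t * Derive hQ t) * u
    + (tauQ t * Derive (fun s => rP s x) t + xiQ x * Derive (rP t) x + rQ t x * hP t
       - (tauP t * Derive (fun s => rQ s x) t + xiP x * Derive (rQ t) x + rP t x * hQ t)).
Proof.
  intros FQ SQ FP SP t x u Hb.
  destruct (FQ _ _ _ Hb) as (Qt & Qx & Qu). destruct (FP _ _ _ Hb) as (Pt & Px & Pu).
  destruct (d3_vt FQ _ _ _ Hb) as (QT0 & QT1 & QT2).
  destruct (d3_vx FQ _ _ _ Hb) as (QX0 & QX1 & QX2).
  destruct (d3_vu FQ SQ _ _ _ Hb) as (QU0 & QU1 & QU2).
  destruct (d3_vt FP _ _ _ Hb) as (PT0 & PT1 & PT2).
  destruct (d3_vx FP _ _ _ Hb) as (PX0 & PX1 & PX2).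
  destruct (d3_vu FP SP _ _ _ Hb) as (PU0 & PU1 & PU2).
  unfold bracket, apply_vf; cbn [vt vx vu].
  rewrite Qt, Qx, Qu, Pt, Px, Pu, QT0, QT1, QT2, QX0, QX1, QX2, QU0, QU1, QU2,
    PT0, PT1, PT2, PX0, PX1, PX2, PU0, PU1, PU2.
  repeat split; ring.
Qed.

(** * Determining equations *)

Lemma Dt_lift3 (F : fun3) (p : jet) :
  Defs.Dt (lift3 F) p =
    d3 0 F (p 0%nat) (p 1%nat) (p 2%nat) + p 3%nat * d3 2 F (p 0%nat) (p 1%nat) (p 2%nat).
Proof. unfold Defs.Dt, pd, lift3, upd. cbn -[Derive]. rewrite !Derive_const. unfold d3. ring. Qed.

Lemma Dx_lift3 (F : fun3) (p : jet) :
  Defs.Dx (lift3 F) p =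
    d3 1 F (p 0%nat) (p 1%nat) (p 2%nat) + p 4%nat * d3 2 F (p 0%nat) (p 1%nat) (p 2%nat).
Proof. unfold Defs.Dx, pd, lift3, upd. cbn -[Derive]. rewrite !Derive_const. unfold d3. ring. Qed.

(* A second-order jet on the equation, with u_x = w free: the invariance criterion there is affine
   in w, and its two coefficients are the determining equations. *)
Definition eq_jet (g : R -> R -> R) (f : fun3) (t x u w : R) : jet :=
  fun i => match i with
  | 0%nat => t | 1%nat => x | 2%nat => u | 4%nat => w | 6%nat => g t x * w + f t x u
  | _ => 0
  end.

Notation jet_box p := (box (p 0%nat) (p 1%nat) (p 2%nat)).

Lemma locally_jet_box k p : jet_box p -> locally (p k) (fun s => jet_box (upd p k s)).
Proof.
  intros Hb. unfold upd. destruct k as [|[|[|k]]]; simpl.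
  - exact (locally_box_t _ _ _ Hb).
  - exact (locally_box_x _ _ _ Hb).
  - exact (locally_box_u _ _ _ Hb).
  - apply filter_forall. intros _. exact Hb.
Qed.

Lemma pd_ext_jet_box (F G : jet -> R) k p :
  (forall q, jet_box q -> F q = G q) -> jet_box p -> pd k F p = pd k G p.
Proof.
  intros HFG Hb. unfold pd. apply Derive_ext_loc.
  apply (filter_imp (fun s => jet_box (upd p k s))).
  - intros s Hs. apply HFG, Hs.
  - apply locally_jet_box, Hb.
Qed.

Section Prolongation.

Context {g : R -> R -> R} {f : fun3} {Q : vfield} {tau xi h : R -> R} {r : R -> R -> R}.

Hypotheses (Sg : smooth (fun t x _ => g t x)) (Sf : smooth f).
Hypotheses (Q_form : special_form_of Q tau xi h r) (Qu_smooth : smooth (vu Q)).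

Lemma eta_t_special p : jet_box p ->
  eta_t Q p = Derive h (p 0%nat) * p 2%nat + p 3%nat * (h (p 0%nat) - Derive tau (p 0%nat))
              + Derive (fun s => r s (p 1%nat)) (p 0%nat).
Proof.
  intros Hb. unfold eta_t. rewrite !Dt_lift3.
  destruct (d3_vt Q_form _ _ _ Hb) as (-> & _ & ->).
  destruct (d3_vx Q_form _ _ _ Hb) as (-> & _ & ->).
  destruct (d3_vu Q_form Qu_smooth _ _ _ Hb) as (-> & _ & ->).
  ring.
Qed.

Lemma eta_x_special p : jet_box p ->
  eta_x Q p = Derive (r (p 0%nat)) (p 1%nat) + p 4%nat * (h (p 0%nat) - Derive xi (p 1%nat)).
Proof.
  intros Hb. unfold eta_x. rewrite !Dx_lift3.
  destruct (d3_vt Q_form _ _ _ Hb) as (_ & -> & ->).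
  destruct (d3_vx Q_form _ _ _ Hb) as (_ & -> & ->).
  destruct (d3_vu Q_form Qu_smooth _ _ _ Hb) as (_ & -> & ->).
  ring.
Qed.

Lemma pd_eta_t p : jet_box p ->
  pd 1 (eta_t Q) p = Derive (fun s => Derive (fun y => r y s) (p 0%nat)) (p 1%nat) /\
  pd 2 (eta_t Q) p = Derive h (p 0%nat) /\
  pd 3 (eta_t Q) p = h (p 0%nat) - Derive tau (p 0%nat) /\
  pd 4 (eta_t Q) p = 0.
Proof.
  intros Hb.
  rewrite !(pd_ext_jet_box (eta_t Q) (fun q => Derive h (q 0%nat) * q 2%nat
     + q 3%nat * (h (q 0%nat) - Derive tau (q 0%nat)) + Derive (fun s => r s (q 1%nat)) (q 0%nat)))
    by (exact eta_t_special || exact Hb).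
  unfold pd, upd. cbn -[Derive].
  split; [apply Derive_const_plus |].
  repeat split; apply is_derive_unique; auto_derive; try exact I; ring.
Qed.

Lemma eta_tx_special p : jet_box p ->
  eta_tx Q p = Derive (fun s => Derive (fun y => r y s) (p 0%nat)) (p 1%nat)
               + p 4%nat * Derive h (p 0%nat)
               + p 6%nat * (h (p 0%nat) - Derive tau (p 0%nat) - Derive xi (p 1%nat)).
Proof.
  intros Hb. unfold eta_tx. rewrite !Dx_lift3. unfold Defs.Dx.
  destruct (pd_eta_t p Hb) as (-> & -> & -> & ->).
  destruct (d3_vt Q_form _ _ _ Hb) as (_ & -> & ->).
  destruct (d3_vx Q_form _ _ _ Hb) as (_ & -> & ->).
  ring.
Qed.

Lemma pd_Delta_eq p : jet_box p ->
  pd 0 (Delta_eq g f) p = - (Derive (fun s => g s (p 1%nat)) (p 0%nat) * p 4%nat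
                             + Derive (fun s => f s (p 1%nat) (p 2%nat)) (p 0%nat)) /\
  pd 1 (Delta_eq g f) p = - (Derive (fun s => g (p 0%nat) s) (p 1%nat) * p 4%nat
                             + Derive (fun s => f (p 0%nat) s (p 2%nat)) (p 1%nat)) /\
  pd 2 (Delta_eq g f) p = - Derive (fun s => f (p 0%nat) (p 1%nat) s) (p 2%nat) /\
  pd 3 (Delta_eq g f) p = 0 /\ pd 4 (Delta_eq g f) p = - g (p 0%nat) (p 1%nat) /\
  pd 5 (Delta_eq g f) p = 0 /\ pd 6 (Delta_eq g f) p = 1 /\ pd 7 (Delta_eq g f) p = 0.
Proof.
  intros Hb.
  pose proof (smooth_ex_d3 _ 0 _ _ _ Sg ltac:(auto) Hb) as Egt.
  pose proof (smooth_ex_d3 _ 1 _ _ _ Sg ltac:(auto) Hb) as Egx.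
  pose proof (smooth_ex_d3 _ 0 _ _ _ Sf ltac:(auto) Hb) as Eft.
  pose proof (smooth_ex_d3 _ 1 _ _ _ Sf ltac:(auto) Hb) as Efx.
  pose proof (smooth_ex_d3 _ 2 _ _ _ Sf ltac:(auto) Hb) as Efu.
  unfold pd, Delta_eq, upd. cbn -[Derive].
  repeat split; apply is_derive_unique; auto_derive;
    try (repeat split; assumption); eta_reduce; ring.
Qed.

Lemma pr2_Delta_eq_special p : jet_box p ->
  let t := p 0%nat in let x := p 1%nat in let u := p 2%nat in
  pr2 Q (Delta_eq g f) p =
    p 4%nat * (Derive h t - Derive tau t * g t x - tau t * Derive (fun s => g s x) t
               - xi x * Derive (fun s => g t s) x)
    + (Derive (fun s => Derive (fun y => r y s) t) x - g t x * Derive (r t) x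
       + (h t - Derive tau t - Derive xi x) * f t x u
       - (h t * u + r t x) * Derive (fun v => f t x v) u
       - tau t * Derive (fun s => f s x u) t - xi x * Derive (fun s => f t s u) x)
    + Delta_eq g f p * (h t - Derive tau t - Derive xi x).
Proof.
  intros Hb. cbv zeta. unfold pr2.
  destruct (pd_Delta_eq p Hb) as (-> & -> & -> & -> & -> & -> & -> & ->).
  rewrite (eta_x_special p Hb), (eta_tx_special p Hb).
  unfold lift3. destruct (Q_form _ _ _ Hb) as (-> & -> & ->).
  unfold Delta_eq. ring.
Qed.

Hypothesis Q_sym : is_symmetry t0 t1 x0 x1 u0 u1 g f Q.

Lemma determining_equations t x u : box t x u ->
  Derive h t = Derive tau t * g t x + tau t * Derive (fun s => g s x) t
               + xi x * Derive (fun s => g t s) x /\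
  Derive (fun s => Derive (fun y => r y s) t) x - g t x * Derive (r t) x
  + (h t - Derive tau t - Derive xi x) * f t x u - (h t * u + r t x) * Derive (fun v => f t x v) u
  - tau t * Derive (fun s => f s x u) t - xi x * Derive (fun s => f t s u) x = 0.
Proof.
  intros Hb.
  assert (Hw : forall w, pr2 Q (Delta_eq g f) (eq_jet g f t x u w) = 0).
  { intros w. apply Q_sym; [exact Hb | unfold Delta_eq, eq_jet; ring]. }
  pose proof (Hw 0) as H0. pose proof (Hw 1) as H1.
  rewrite (pr2_Delta_eq_special (eq_jet g f t x u 0) Hb) in H0.
  rewrite (pr2_Delta_eq_special (eq_jet g f t x u 1) Hb) in H1.
  unfold Delta_eq, eq_jet in H0, H1. cbv beta iota in H0, H1.
  split; lra.
Qed.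

Hypothesis Qx_smooth : smooth (vx Q).

Lemma determining_eq_h_dx t x u : box t x u ->
  Derive tau t * Derive (fun s => g t s) x + tau t * Derive (fun s => Derive (fun y => g y s) t) x
  + Derive xi x * Derive (fun s => g t s) x
  + xi x * Derive (fun s => Derive (fun y => g t y) s) x = 0.
Proof.
  intros Hb.
  pose (G := fun s => g t s). pose (Gt := fun s => Derive (fun y => g y s) t).
  pose (Gx := fun s => Derive (fun y => g t y) s).
  assert (EG : ex_derive G x) by exact (smooth_ex_d3 _ 1 _ _ _ Sg ltac:(auto) Hb).
  assert (EGt : ex_derive Gt x)
    by exact (smooth_ex_d3_d3 _ 0 1 _ _ _ Sg ltac:(auto) ltac:(auto) Hb).
  assert (EGx : ex_derive Gx x)
    by exact (smooth_ex_d3_d3 _ 1 1 _ _ _ Sg ltac:(auto) ltac:(auto) Hb).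
  pose proof (ex_derive_xi Q_form Qx_smooth _ _ _ Hb) as Exi.
  assert (Hc : Derive (fun s => Derive tau t * G s + tau t * Gt s + xi s * Gx s) x = 0).
  { apply (Derive_locally_const _ (Derive h t)).
    apply (filter_imp (fun s => box t s u)); [| exact (locally_box_x _ _ _ Hb)].
    intros s Hs. symmetry. exact (proj1 (determining_equations t s u Hs)). }
  rewrite <- Hc. symmetry. apply is_derive_unique. auto_derive.
  - repeat split; assumption.
  - unfold G, Gt, Gx. cbv beta. eta_reduce. ring.
Qed.

Lemma determining_eq_r_du t x u : box t x u ->
  - (Derive tau t + Derive xi x) * Derive (fun v => f t x v) u
  - (h t * u + r t x) * Derive (fun s => Derive (fun v => f t x v) s) u
  - tau t * Derive (fun s => Derive (fun y => f y x s) t) u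
  - xi x * Derive (fun s => Derive (fun y => f t y s) x) u = 0.
Proof.
  intros Hb.
  pose (F := fun s => f t x s). pose (Fu := fun s => Derive (fun v => f t x v) s).
  pose (Ft := fun s => Derive (fun y => f y x s) t).
  pose (Fx := fun s => Derive (fun y => f t y s) x).
  pose (a := Derive (fun s => Derive (fun y => r y s) t) x - g t x * Derive (r t) x).
  assert (EF : ex_derive F u) by exact (smooth_ex_d3 _ 2 _ _ _ Sf ltac:(auto) Hb).
  assert (EFu : ex_derive Fu u)
    by exact (smooth_ex_d3_d3 _ 2 2 _ _ _ Sf ltac:(auto) ltac:(auto) Hb).
  assert (EFt : ex_derive Ft u)
    by exact (smooth_ex_d3_d3 _ 0 2 _ _ _ Sf ltac:(auto) ltac:(auto) Hb).
  assert (EFx : ex_derive Fx u)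
    by exact (smooth_ex_d3_d3 _ 1 2 _ _ _ Sf ltac:(auto) ltac:(auto) Hb).
  assert (Hc : Derive (fun s => a + (h t - Derive tau t - Derive xi x) * F s
                 - (h t * s + r t x) * Fu s - tau t * Ft s - xi x * Fx s) u = 0).
  { apply (Derive_locally_const _ 0).
    apply (filter_imp (fun s => box t x s)); [| exact (locally_box_u _ _ _ Hb)].
    intros s Hs. exact (proj2 (determining_equations t x s Hs)). }
  rewrite <- Hc. symmetry. apply is_derive_unique. auto_derive.
  - repeat split; assumption.
  - unfold F, Fu, Ft, Fx. cbv beta. eta_reduce. ring.
Qed.

End Prolongation.

(** * Commutation relations *)

Definition bracket_rel (Q P S : vfield) (c : R) : Prop :=
  forall t x u, box t x u ->
    vt (bracket Q P) t x u = c * vt S t x u /\ vx (bracket Q P) t x u = c * vx S t x u /\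
    vu (bracket Q P) t x u = c * vu S t x u.

Lemma bracket_rel_of_eq {Q P S} :
  vf_eq_box t0 t1 x0 x1 u0 u1 (bracket Q P) S -> bracket_rel Q P S 1.
Proof. intros HE t x u Hb. destruct (HE t x u Hb) as (-> & -> & ->). repeat split; ring. Qed.

Lemma bracket_rel_of_eq_scale {Q P S} c :
  vf_eq_box t0 t1 x0 x1 u0 u1 (bracket Q P) (scale_vf c S) -> bracket_rel Q P S c.
Proof. intros HE t x u Hb. exact (HE t x u Hb). Qed.

Lemma bracket_rel_coeffs {Q tauQ xiQ hQ rQ P tauP xiP hP rP S tauS xiS hS rS} c :
  u0 < u1 ->
  special_form_of Q tauQ xiQ hQ rQ -> smooth (vu Q) ->
  special_form_of P tauP xiP hP rP -> smooth (vu P) ->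
  special_form_of S tauS xiS hS rS -> bracket_rel Q P S c ->
  forall t x, t0 < t < t1 -> x0 < x < x1 ->
  tauQ t * Derive tauP t - tauP t * Derive tauQ t = c * tauS t /\
  xiQ x * Derive xiP x - xiP x * Derive xiQ x = c * xiS x /\
  tauQ t * Derive hP t - tauP t * Derive hQ t = c * hS t /\
  tauQ t * Derive (fun s => rP s x) t + xiQ x * Derive (rP t) x + rQ t x * hP t
  - (tauP t * Derive (fun s => rQ s x) t + xiP x * Derive (rQ t) x + rP t x * hQ t) = c * rS t x.
Proof.
  intros Hu FQ SQ FP SP FS HR t x Ht Hx.
  set (ua := (2 * u0 + u1) / 3). set (ub := (u0 + 2 * u1) / 3).
  assert (Ha : box t x ua) by (repeat split; unfold ua; lra).
  assert (Hb : box t x ub) by (repeat split; unfold ub; lra).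
  destruct (bracket_special FQ SQ FP SP t x ua Ha) as (BT & BX & BUa).
  destruct (bracket_special FQ SQ FP SP t x ub Hb) as (_ & _ & BUb).
  destruct (HR t x ua Ha) as (RT & RX & RUa). destruct (HR t x ub Hb) as (_ & _ & RUb).
  destruct (FS t x ua Ha) as (ST & SX & SUa). destruct (FS t x ub Hb) as (_ & _ & SUb).
  rewrite BT, ST in RT. rewrite BX, SX in RX. rewrite BUa, SUa in RUa. rewrite BUb, SUb in RUb.
  replace (c * (hS t * ua + rS t x)) with (c * hS t * ua + c * rS t x) in RUa by ring.
  replace (c * (hS t * ub + rS t x)) with (c * hS t * ub + c * rS t x) in RUb by ring.
  assert (Hab : ua <> ub) by (unfold ua, ub; lra).
  destruct (affine_coeffs_eq _ _ _ _ ua ub Hab RUa RUb) as [Hh Hr].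
  repeat split; assumption.
Qed.

Lemma lin_indep3_first_nonzero Q1 Q2 Q3 :
  lin_indep3 t0 t1 x0 x1 u0 u1 Q1 Q2 Q3 ->
  ~ (forall t x u, box t x u -> vt Q1 t x u = 0 /\ vx Q1 t x u = 0 /\ vu Q1 t x u = 0).
Proof.
  intros Hli HQ1.
  assert (H10 : vf_eq_box t0 t1 x0 x1 u0 u1 (lincomb3 1 0 0 Q1 Q2 Q3) vf_zero).
  { intros t x u Hb. destruct (HQ1 t x u Hb) as (Z1 & Z2 & Z3). cbn.
    rewrite Z1, Z2, Z3. repeat split; ring. }
  destruct (Hli 1 0 0 H10) as [H _]. lra.
Qed.

Section Triple.

Context {Q1 Q2 Q3 : vfield} {tau1 xi1 h1 tau2 xi2 h2 tau3 xi3 h3 : R -> R}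
  {r1 r2 r3 : R -> R -> R}.

Hypotheses (Q1_form : special_form_of Q1 tau1 xi1 h1 r1) (Q1_smooth_u : smooth (vu Q1))
  (Q2_form : special_form_of Q2 tau2 xi2 h2 r2) (Q2_smooth_u : smooth (vu Q2))
  (Q3_form : special_form_of Q3 tau3 xi3 h3 r3) (Q3_smooth_u : smooth (vu Q3)).

Lemma so3_first_vanishes :
  bracket_rel Q1 Q2 Q3 1 -> bracket_rel Q2 Q3 Q1 1 -> bracket_rel Q3 Q1 Q2 1 ->
  forall t x u, box t x u -> vt Q1 t x u = 0 /\ vx Q1 t x u = 0 /\ vu Q1 t x u = 0.
Proof.
  intros R12 R23 R31 t x u Hb. pose proof Hb as (Ht & Hx & Hu).
  assert (Hu01 : u0 < u1) by lra.
  destruct (bracket_rel_coeffs 1 Hu01 Q1_form Q1_smooth_u Q2_form Q2_smooth_u Q3_form R12 t x Ht Hx)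
    as (T12 & X12 & H12 & _).
  destruct (bracket_rel_coeffs 1 Hu01 Q2_form Q2_smooth_u Q3_form Q3_smooth_u Q1_form R23 t x Ht Hx)
    as (T23 & X23 & H23 & B23).
  destruct (bracket_rel_coeffs 1 Hu01 Q3_form Q3_smooth_u Q1_form Q1_smooth_u Q2_form R31 t x Ht Hx)
    as (T31 & X31 & H31 & _).
  destruct (so3_fixed_zero (tau1 t) (tau2 t) (tau3 t) (Derive tau1 t) (Derive tau2 t)
    (Derive tau3 t)) as (T1 & T2 & T3); [lra | lra | lra |].
  destruct (so3_fixed_zero (xi1 x) (xi2 x) (xi3 x) (Derive xi1 x) (Derive xi2 x) (Derive xi3 x))
    as (X1 & X2 & X3); [lra | lra | lra |].
  rewrite T1, T2, T3 in *.
  assert (Z1 : h1 t = 0) by lra. assert (Z2 : h2 t = 0) by lra. assert (Z3 : h3 t = 0) by lra.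
  rewrite X2, X3, Z2, Z3 in B23.
  destruct (Q1_form t x u Hb) as (-> & -> & ->).
  rewrite T1, X1, Z1. repeat split; lra.
Qed.

Section Sl2.

Context {g : R -> R -> R} {f : fun3}.

Hypotheses (Sg : smooth (fun t x _ => g t x)) (Sf : smooth f)
  (g_x_neq0 : forall t x, t0 < t < t1 -> x0 < x < x1 -> Derive (fun s => g t s) x <> 0)
  (f_uu_neq0 : forall t x u, box t x u -> Derive (fun s => Derive (fun v => f t x v) s) u <> 0).

Hypotheses (Q1_smooth_x : smooth (vx Q1)) (Q2_smooth_x : smooth (vx Q2))
  (Q3_smooth_x : smooth (vx Q3))
  (Q1_sym : is_symmetry t0 t1 x0 x1 u0 u1 g f Q1) (Q2_sym : is_symmetry t0 t1 x0 x1 u0 u1 g f Q2)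
  (Q3_sym : is_symmetry t0 t1 x0 x1 u0 u1 g f Q3).

Hypotheses (R12 : bracket_rel Q1 Q2 Q1 1) (R23 : bracket_rel Q2 Q3 Q3 1)
  (R13 : bracket_rel Q1 Q3 Q2 2).

Hypotheses (Ht01 : t0 < t1) (Hx01 : x0 < x1) (Hu01 : u0 < u1).

Let coeffs12 := bracket_rel_coeffs 1 Hu01 Q1_form Q1_smooth_u Q2_form Q2_smooth_u Q1_form R12.
Let coeffs23 := bracket_rel_coeffs 1 Hu01 Q2_form Q2_smooth_u Q3_form Q3_smooth_u Q3_form R23.
Let coeffs13 := bracket_rel_coeffs 2 Hu01 Q1_form Q1_smooth_u Q3_form Q3_smooth_u Q2_form R13.

Lemma sl2_h_commutators t x : t0 < t < t1 -> x0 < x < x1 ->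
  h1 t = g t x * tau1 t + Derive (fun s => g t s) x * (tau1 t * xi2 x - tau2 t * xi1 x) /\
  h3 t = g t x * tau3 t + Derive (fun s => g t s) x * (tau2 t * xi3 x - tau3 t * xi2 x) /\
  2 * h2 t = 2 * g t x * tau2 t + Derive (fun s => g t s) x * (tau1 t * xi3 x - tau3 t * xi1 x).
Proof.
  intros Ht Hx.
  assert (Hb : box t x ((u0 + u1) / 2)) by (repeat split; lra).
  destruct (coeffs12 t x Ht Hx) as (T12 & _ & H12 & _).
  destruct (coeffs23 t x Ht Hx) as (T23 & _ & H23 & _).
  destruct (coeffs13 t x Ht Hx) as (T13 & _ & H13 & _).
  pose proof (proj1 (determining_equations Sg Sf Q1_form Q1_smooth_u Q1_sym _ _ _ Hb)) as D1.
  pose proof (proj1 (determining_equations Sg Sf Q2_form Q2_smooth_u Q2_sym _ _ _ Hb)) as D2.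
  pose proof (proj1 (determining_equations Sg Sf Q3_form Q3_smooth_u Q3_sym _ _ _ Hb)) as D3.
  rewrite D1, D2 in H12. rewrite D2, D3 in H23. rewrite D1, D3 in H13.
  pose proof (f_equal (Rmult (g t x)) T12). pose proof (f_equal (Rmult (g t x)) T23).
  pose proof (f_equal (Rmult (g t x)) T13).
  repeat split; lra.
Qed.

Lemma sl2_h_in_span t x : t0 < t < t1 -> x0 < x < x1 ->
  exists c d, h1 t = tau1 t * c + xi1 x * d /\ h2 t = tau2 t * c + xi2 x * d /\
              h3 t = tau3 t * c + xi3 x * d.
Proof.
  intros Ht Hx.
  set (ua := (2 * u0 + u1) / 3). set (ub := (u0 + 2 * u1) / 3).
  assert (Ha : box t x ua) by (repeat split; unfold ua; lra).
  assert (Hb : box t x ub) by (repeat split; unfold ub; lra).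
  assert (Hab : ua <> ub) by (unfold ua, ub; lra).
  pose proof (g_x_neq0 t x Ht Hx) as HG.
  pose proof (f_uu_neq0 t x ua Ha) as HFa. pose proof (f_uu_neq0 t x ub Hb) as HFb.
  pose proof (determining_eq_h_dx Sg Sf Q1_form Q1_smooth_u Q1_sym Q1_smooth_x _ _ _ Ha) as V1.
  pose proof (determining_eq_h_dx Sg Sf Q2_form Q2_smooth_u Q2_sym Q2_smooth_x _ _ _ Ha) as V2.
  pose proof (determining_eq_h_dx Sg Sf Q3_form Q3_smooth_u Q3_sym Q3_smooth_x _ _ _ Ha) as V3.
  pose proof (determining_eq_r_du Sg Sf Q1_form Q1_smooth_u Q1_sym _ _ _ Ha) as E1a.
  pose proof (determining_eq_r_du Sg Sf Q1_form Q1_smooth_u Q1_sym _ _ _ Hb) as E1b.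
  pose proof (determining_eq_r_du Sg Sf Q2_form Q2_smooth_u Q2_sym _ _ _ Ha) as E2a.
  pose proof (determining_eq_r_du Sg Sf Q2_form Q2_smooth_u Q2_sym _ _ _ Hb) as E2b.
  pose proof (determining_eq_r_du Sg Sf Q3_form Q3_smooth_u Q3_sym _ _ _ Ha) as E3a.
  pose proof (determining_eq_r_du Sg Sf Q3_form Q3_smooth_u Q3_sym _ _ _ Hb) as E3b.
  pose proof (in_span_of_relations _ _ _ _ _ _ _ _ _ _ _ _ _ _ HG HFa V1 E1a) as S1a.
  pose proof (in_span_of_relations _ _ _ _ _ _ _ _ _ _ _ _ _ _ HG HFb V1 E1b) as S1b.
  pose proof (in_span_of_relations _ _ _ _ _ _ _ _ _ _ _ _ _ _ HG HFa V2 E2a) as S2a.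
  pose proof (in_span_of_relations _ _ _ _ _ _ _ _ _ _ _ _ _ _ HG HFb V2 E2b) as S2b.
  pose proof (in_span_of_relations _ _ _ _ _ _ _ _ _ _ _ _ _ _ HG HFa V3 E3a) as S3a.
  pose proof (in_span_of_relations _ _ _ _ _ _ _ _ _ _ _ _ _ _ HG HFb V3 E3b) as S3b.
  do 2 eexists. split; [| split].
  - exact (affine_in_span _ _ _ _ _ _ _ _ _ _ Hab S1a S1b).
  - exact (affine_in_span _ _ _ _ _ _ _ _ _ _ Hab S2a S2b).
  - exact (affine_in_span _ _ _ _ _ _ _ _ _ _ Hab S3a S3b).
Qed.

Lemma sl2_commutators_zero t x : t0 < t < t1 -> x0 < x < x1 ->
  tau1 t * xi2 x - tau2 t * xi1 x = 0 /\ tau2 t * xi3 x - tau3 t * xi2 x = 0 /\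
  tau1 t * xi3 x - tau3 t * xi1 x = 0.
Proof.
  intros Ht Hx.
  destruct (sl2_h_in_span t x Ht Hx) as (c & d & S1 & S2 & S3).
  destruct (sl2_h_commutators t x Ht Hx) as (C1 & C3 & C2).
  destruct (coeffs12 t x Ht Hx) as (T12 & X12 & _).
  destruct (coeffs23 t x Ht Hx) as (T23 & X23 & _).
  destruct (coeffs13 t x Ht Hx) as (T13 & X13 & _).
  apply (cone_commutators_zero _ _ _ _ _ _ (c - g t x) d (Derive (fun s => g t s) x)).
  - apply (sl2_cone _ _ _ (Derive tau1 t) (Derive tau2 t) (Derive tau3 t)); lra.
  - apply (sl2_cone _ _ _ (Derive xi1 x) (Derive xi2 x) (Derive xi3 x)); lra.
  - exact (g_x_neq0 t x Ht Hx).
  - lra.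
  - lra.
  - lra.
Qed.

Lemma sl2_tau_zero t : t0 < t < t1 -> tau1 t = 0 /\ tau2 t = 0 /\ tau3 t = 0.
Proof.
  intros Ht. assert (Hx : x0 < (x0 + x1) / 2 < x1) by lra.
  assert (Hh : forall s, x0 < s < x1 ->
            g t s * tau1 t = h1 t /\ g t s * tau2 t = h2 t /\ g t s * tau3 t = h3 t).
  { intros s Hs. destruct (sl2_h_commutators t s Ht Hs) as (C1 & C3 & C2).
    destruct (sl2_commutators_zero t s Ht Hs) as (W12 & W23 & W13).
    rewrite W12 in C1. rewrite W23 in C3. rewrite W13 in C2. repeat split; lra. }
  repeat split; eapply (locally_scaled_const_zero (fun s => g t s));
    try exact (g_x_neq0 t _ Ht Hx); apply (locally_open_interval _ _ _ _ Hx);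
    intros s Hs; destruct (Hh s Hs) as (? & ? & ?); eassumption.
Qed.

Lemma sl2_h_zero t : t0 < t < t1 -> h1 t = 0 /\ h2 t = 0 /\ h3 t = 0.
Proof.
  intros Ht. assert (Hx : x0 < (x0 + x1) / 2 < x1) by lra.
  destruct (sl2_h_commutators t _ Ht Hx) as (C1 & C3 & C2).
  destruct (sl2_tau_zero t Ht) as (T1 & T2 & T3). rewrite T1, T2, T3 in *.
  repeat split; lra.
Qed.

Lemma sl2_xi_zero x : x0 < x < x1 -> xi1 x = 0 /\ xi2 x = 0 /\ xi3 x = 0.
Proof.
  intros Hx. set (t := (t0 + t1) / 2).
  assert (Ht : t0 < t < t1) by (unfold t; lra).
  assert (Hb : box t x ((u0 + u1) / 2)) by (repeat split; lra).
  assert (Hk : forall a, a * Derive (fun s => g t s) x = 0 -> a = 0).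
  { intros a Ha. destruct (Rmult_integral _ _ Ha) as [H0 | H0]; [exact H0 |].
    contradiction (g_x_neq0 t x Ht Hx). }
  destruct (sl2_tau_zero t Ht) as (T1 & T2 & T3).
  assert (DT : Derive tau1 t = 0 /\ Derive tau2 t = 0 /\ Derive tau3 t = 0).
  { repeat split; apply (Derive_locally_const _ 0), (locally_open_interval _ _ _ _ Ht);
      intros s Hs; destruct (sl2_tau_zero s Hs) as (? & ? & ?); assumption. }
  assert (DH : Derive h1 t = 0 /\ Derive h2 t = 0 /\ Derive h3 t = 0).
  { repeat split; apply (Derive_locally_const _ 0), (locally_open_interval _ _ _ _ Ht);
      intros s Hs; destruct (sl2_h_zero s Hs) as (? & ? & ?); assumption. }
  destruct DT as (DT1 & DT2 & DT3). destruct DH as (DH1 & DH2 & DH3).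
  pose proof (proj1 (determining_equations Sg Sf Q1_form Q1_smooth_u Q1_sym _ _ _ Hb)) as D1.
  pose proof (proj1 (determining_equations Sg Sf Q2_form Q2_smooth_u Q2_sym _ _ _ Hb)) as D2.
  pose proof (proj1 (determining_equations Sg Sf Q3_form Q3_smooth_u Q3_sym _ _ _ Hb)) as D3.
  rewrite T1, DT1, DH1 in D1. rewrite T2, DT2, DH2 in D2. rewrite T3, DT3, DH3 in D3.
  repeat split; apply Hk; lra.
Qed.

Lemma sl2_first_vanishes t x u : box t x u ->
  vt Q1 t x u = 0 /\ vx Q1 t x u = 0 /\ vu Q1 t x u = 0.
Proof.
  intros Hb. pose proof Hb as (Ht & Hx & _).
  destruct (sl2_tau_zero t Ht) as (T1 & T2 & _). destruct (sl2_xi_zero x Hx) as (X1 & X2 & _).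
  destruct (sl2_h_zero t Ht) as (H1 & H2 & _).
  destruct (coeffs12 t x Ht Hx) as (_ & _ & _ & B12).
  rewrite T1, T2, X1, X2, H1, H2 in B12.
  destruct (Q1_form t x u Hb) as (-> & -> & ->). rewrite T1, X1, H1. repeat split; lra.
Qed.

End Sl2.

End Triple.

End Box.

Theorem theorem6 :
  forall (t0 t1 x0 x1 u0 u1 : R) (g : R -> R -> R) (f : R -> R -> R -> R),
    t0 < t1 -> x0 < x1 -> u0 < u1 ->
    smooth_box t0 t1 x0 x1 u0 u1 (fun t x _ => g t x) ->
    smooth_box t0 t1 x0 x1 u0 u1 f ->
    (forall t x, t0 < t < t1 -> x0 < x < x1 -> Derive (fun s => g t s) x <> 0) ->
    (forall t x u, in_box t0 t1 x0 x1 u0 u1 t x u ->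
       Derive (fun s => Derive (fun v => f t x v) s) u <> 0) ->
    ~ (exists Q1 Q2 Q3 : vfield,
         (forall Q, Q = Q1 \/ Q = Q2 \/ Q = Q3 ->
            smooth_box t0 t1 x0 x1 u0 u1 (vt Q) /\
            smooth_box t0 t1 x0 x1 u0 u1 (vx Q) /\
            smooth_box t0 t1 x0 x1 u0 u1 (vu Q) /\
            special_form t0 t1 x0 x1 u0 u1 Q /\
            is_symmetry t0 t1 x0 x1 u0 u1 g f Q) /\
         lin_indep3 t0 t1 x0 x1 u0 u1 Q1 Q2 Q3 /\
         (so3_relations t0 t1 x0 x1 u0 u1 Q1 Q2 Q3 \/
          sl2_relations t0 t1 x0 x1 u0 u1 Q1 Q2 Q3)).
Proof.
  intros t0 t1 x0 x1 u0 u1 g f Ht Hx Hu Sg Sf Hgx Hfuu [Q1 [Q2 [Q3 [HQ [Hindep Hrel]]]]].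
  destruct (HQ Q1 (or_introl eq_refl))
    as (_ & X1 & U1 & [tau1 [xi1 [h1 [r1 F1]]]] & Sym1).
  destruct (HQ Q2 (or_intror (or_introl eq_refl)))
    as (_ & X2 & U2 & [tau2 [xi2 [h2 [r2 F2]]]] & Sym2).
  destruct (HQ Q3 (or_intror (or_intror eq_refl)))
    as (_ & X3 & U3 & [tau3 [xi3 [h3 [r3 F3]]]] & Sym3).
  apply (lin_indep3_first_nonzero _ _ _ _ _ _ _ _ _ Hindep). intros t x u Hb.
  destruct Hrel as [(R12 & R23 & R31) | (R12 & R23 & R13)].
  - apply (so3_first_vanishes _ _ _ _ _ _ F1 U1 F2 U2 F3 U3);
      auto using bracket_rel_of_eq.
  - apply (sl2_first_vanishes _ _ _ _ _ _ F1 U1 F2 U2 F3 U3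
      Sg Sf Hgx Hfuu X1 X2 X3 Sym1 Sym2 Sym3);
      auto using bracket_rel_of_eq, bracket_rel_of_eq_scale.
Qed.
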